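(* Let $t\ge1$ and let $\mathcal{C}_0\subseteq S^\ell$ be a code of length $\ell$ over a set $S$ of size $s$, with dual distance $t+2\le\ell$ and no repeated codewords. Let $\mathcal{T}_{\mathcal{C}_0}=(X,\mathcal{B},\mathcal{G})$ be its associated design and $q$ a prime power. Then the query distribution $\mathcal{Q}$ on $\mathcal{T}_{\mathcal{C}_0}$ (defined in the context) is $t$-private: for every $T\subseteq[1,\ell]$ with $|T|\le t$ and all $i,i'\in X$, the tuples $(\mathcal{Q}(i)_j)_{j\in T}$ and $(\mathcal{Q}(i')_j)_{j\in T}$ have the same distribution; and for every $u\in\mathrm{IC}_q(\mathcal{C}_0)$ and every outcome, $u_i=-\sum_{j\ne j^*(i)}u_{\mathcal{Q}(i)_j}$.
   Context: $\mathcal{T}_{\mathcal{C}_0}$: points $X=S\times[1,\ell]$, groups $G_j=S\times\{j\}$ ($1\le j\le\ell$), blocks $B_c=\{(c_j,j):1\le j\le\ell\}$ for $c\in\mathcal{C}_0$. $\mathrm{IC}_q(\mathcal{C}_0)=\{u\in\mathbb{F}_q^X:\sum_{x\in B_c}u_x=0\ \forall c\in\mathcal{C}_0\}$. Dual distance (Delsarte): with $A_i=\frac{1}{|\mathcal{C}_0|}\#\{(c,c')\in\mathcal{C}_0^2:d(c,c')=i\}$ and $B_k=\frac{1}{|\mathcal{C}_0|}\sum_{i=0}^\ell A_iK_k(i)$, where $K_k(i)=\sum_{j}(-1)^j(s-1)^{k-j}\binom{i}{j}\binom{\ell-i}{k-j}$, the dual distance is the least $k\ge1$ with $B_k\ne0$;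 for a linear code it equals the minimum distance of the dual code. Query distribution: for $i\in X$ let $j^*=j^*(i)$ be the index with $i\in G_{j^*}$, $\mathcal{B}_i$ the set of blocks containing $i$; choose $B$ uniformly in $\mathcal{B}_i$ and independently $\mathcal{Q}(i)_{j^*}$ uniformly in $G_{j^*}$; for $j\ne j^*$, $\mathcal{Q}(i)_j$ is the unique element of $B\cap G_j$. *)

From HB Require Import structures.
From mathcomp Require Import all_boot all_order all_algebra all_field.
Set Implicit Arguments. Unset Strict Implicit. Unset Printing Implicit Defensive.
Import Order.TTheory GRing.Theory Num.Theory.

(* Coordinates [1, l] are represented 0-based by 'I_l.
   A word of length l over S is a finite function 'I_l -> S.
   A code without repeated codewords is a finite set of words. *)
Definition word (S : finType) (l : nat) := {ffun 'I_l -> S}.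

Section Code.
Variables (S : finType) (l : nat).
Local Open Scope ring_scope.

Definition hamming (c c' : word S l) : nat := #|[set j | c j != c' j]|.

Definition krawtchouk (k i : nat) : rat :=
  \sum_(j < k.+1) (-1) ^+ j * (#|S|%:R - 1) ^+ (k - j)
                  * ('C(i, j))%:R * ('C(l - i, k - j))%:R.

Definition distA (C : {set word S l}) (i : nat) : rat :=
  (#|[set p : word S l * word S l |
        (p.1 \in C) && (p.2 \in C) && (hamming p.1 p.2 == i)]|)%:R / (#|C|)%:R.

Definition distB (C : {set word S l}) (k : nat) : rat :=
  (#|C|)%:R^-1 * \sum_(i < l.+1) distA C i * krawtchouk k i.

Definition dual_distance_is (C : {set word S l}) (d : nat) : Prop :=
  (1 <= d)%N /\ distB C d != 0 /\
  forall k : nat, (1 <= k)%N -> (k < d)%N -> distB C k = 0.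

Definition point := (S * 'I_l)%type.
Definition group (j : 'I_l) : {set point} := [set x : point | x.2 == j].
Definition block (c : word S l) : {set point} := [set (c j, j) | j : 'I_l].
Definition blocks (C : {set word S l}) : {set {set point}} := [set block c | c in C].
Definition blocks_at (C : {set word S l}) (i : point) : {set {set point}} :=
  [set B in blocks C | i \in B].

Definition IC (F : fieldType) (C : {set word S l}) (u : point -> F) : Prop :=
  forall c, c \in C -> \sum_(x in block c) u x = 0.

(* Query distribution: an outcome for i is a pair (B, x) with B uniform in
   blocks_at C i and x uniform in S (so that Q(i)_{j_star} = (x, j_star)),
   chosen independently: i.e. uniform on the product set. *)
Definition outcomes (C : {set word S l}) (i : point) : {set {set point} * S} :=
  [set o : {set point} * S | o.1 \in blocks_at C i].

Definition query (i : point) (o : {set point} * S) (j : 'I_l) : point :=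
  if j == i.2 then (o.2, i.2) else odflt i [pick y | y \in o.1 :&: group j].

Definition query_prob (C : {set word S l}) (i : point)
    (E : ('I_l -> point) -> bool) : rat :=
  (#|[set o in outcomes C i | E (query i o)]|)%:R / (#|outcomes C i|)%:R.

End Code.

From HB Require Import structures.
From mathcomp Require Import all_boot all_order all_algebra all_field.
From mathcomp Require Import ring zify.
Import Order.TTheory GRing.Theory Num.Theory.
Set Implicit Arguments. Unset Strict Implicit. Unset Printing Implicit Defensive.
Local Open Scope ring_scope.

(* Delsarte: the dual-distance hypothesis makes C an orthogonal array of
   strength t+1.  With the centred delta e(a, b) = s[a = b] - 1 one has
   sum_{|J| = k} prod_{j in J} e(x_j, y_j) = K_k(d(x, y)), hence
   |C|^2 B_k = sum_{|J| = k} sum_{x, y in C} prod_{j in J} e(x_j, y_j).  Since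
   sum_z e(a, z) e(b, z) = s e(a, b), each inner sum is s^-l times a sum of
   squares of the numbers sum_{c in C} prod_{j in J} e(c_j, w_j), so B_k = 0
   makes all of them vanish; expanding prod_{j in J} (e(c_j, w_j) + 1) =
   s^|J| [c = w on J] then shows that each pattern on J is taken by exactly
   |C| / s^|J| codewords.
   An outcome of the query for a point i = (a, j0) amounts to a codeword c
   with c_j0 = a and a uniform symbol x; its restriction to T is the pattern
   of c on T minus j0, plus x if j0 lies in T, so counting codewords with a
   given pattern on T + j0 gives each admissible pattern on T probability
   s^-|T|, whatever i is.  Recovery is the equation of the block through i. *)

Lemma prod_add1 (R : comNzRingType) (I : finType) (a : I -> R) :
  \prod_i (a i + 1) = \sum_(A : {set I}) \prod_(i in A) a i.
Proof.
rewrite (bigA_distr _ _ a (fun=> 1)).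
by apply: eq_bigr => A _; rewrite [RHS]big_mkcond.
Qed.

Lemma prod_add1_in (R : comNzRingType) (I : finType) (J : {set I}) (a : I -> R) :
  \prod_(i in J) (a i + 1) = \sum_(A : {set I} | A \subset J) \prod_(i in A) a i.
Proof.
rewrite big_mkcond (eq_bigr (fun i => (if i \in J then a i else 0) + 1)); last first.
  by move=> i _; case: ifP => //; rewrite add0r.
rewrite prod_add1 [RHS]big_mkcond; apply: eq_bigr => A _.
case: ifP => [sAJ | /negbT /subsetPn [i iA niJ]].
  by apply: eq_bigr => i iA; rewrite (subsetP sAJ i iA).
by rewrite (bigD1 i) //= (negbTE niJ) mul0r.
Qed.

Lemma coef_exp_CX1 (R : comNzRingType) (c : R) n i :
  ((c%:P * 'X + 1) ^+ n)`_i = c ^+ i *+ 'C(n, i).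
Proof.
elim: n i => [|n IH] i.
  by rewrite expr0 coefC; case: i => [|i]; rewrite ?expr0 ?bin0 ?bin0n.
rewrite exprSr mulrDr mulr1 coefD mulrA coefMX coefMC IH addrC.
case: i => [|i]; first by rewrite /= addr0 IH !bin0.
by rewrite /= IH binS mulrnDr mulrnAl -exprSr addrC.
Qed.

Lemma sumr_indicator (T : finType) (P Q : pred T) :
  \sum_(p | P p) ((Q p)%:R : rat) = #|[set p | P p && Q p]|%:R.
Proof.
rewrite -sum1_card natr_sum [LHS]big_mkcond [RHS]big_mkcond /=.
by apply: eq_bigr => p _; rewrite inE; case: (P p); case: (Q p).
Qed.

Lemma prodr_indicator (I : finType) (J : {set I}) (b : pred I) :
  \prod_(j in J) ((b j)%:R : rat) = [forall j in J, b j]%:R.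
Proof.
have [/forall_inP bJ | /forall_inPn [j jJ /negbTE nbj]] := boolP [forall j in J, b j].
  by apply: big1 => j /bJ ->.
by rewrite (bigD1 j) //= nbj mul0r.
Qed.

Section Delsarte.
Variables (S : finType) (l : nat).
Local Notation s := (#|S|%:R : rat).

Definition cdelta (a b : S) : rat := s * (a == b)%:R - 1.

Lemma sum_cdelta_mul (a b : S) : \sum_z cdelta a z * cdelta b z = s * cdelta a b.
Proof.
have sum_delta (c : S) (f : S -> rat) : \sum_z (c == z)%:R * f z = f c.
  rewrite (bigD1 c) //= eqxx mul1r big1 ?addr0 // => z /negbTE.
  by rewrite eq_sym => ->; rewrite mul0r.
rewrite (eq_bigr (fun z => s * s * ((a == z)%:R * (b == z)%:R) - s * ((a == z)%:R * 1)
   - s * ((b == z)%:R * 1) + 1)); last by move=> z _; rewrite /cdelta; ring.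
rewrite !big_split /= !sumrN -!mulr_sumr !sum_delta sumr_const /cdelta.
by rewrite eq_sym; ring.
Qed.

Lemma cdelta_gram (J : {set 'I_l}) (x y : word S l) :
  s ^+ l * \prod_(j in J) cdelta (x j) (y j) =
  \sum_(w : word S l) (\prod_(j in J) cdelta (x j) (w j)) * \prod_(j in J) cdelta (y j) (w j).
Proof.
pose F j z := if j \in J then cdelta (x j) z * cdelta (y j) z else 1.
rewrite (eq_bigr (fun w : word S l => \prod_j F j (w j))); last first.
  by move=> w _; rewrite -big_split /= big_mkcond.
rewrite -(bigA_distr_bigA F) /=.
rewrite [RHS](eq_bigr (fun j => s * (if j \in J then cdelta (x j) (y j) else 1))); last first.
  move=> j _; rewrite /F; case: ifP => _; first exact: sum_cdelta_mul.
  by rewrite sumr_const mulr1.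
by rewrite big_split /= prodr_const card_ord -big_mkcond.
Qed.

Lemma sum_prod_cdelta_krawtchouk (x y : word S l) k :
  \sum_(J : {set 'I_l} | #|J| == k) \prod_(j in J) cdelta (x j) (y j) =
  krawtchouk S l k (hamming x y).
Proof.
pose P : {poly rat} := \prod_(j < l) ((cdelta (x j) (y j))%:P * 'X + 1).
have P_subsets : P = \sum_(A : {set 'I_l}) (\prod_(j in A) cdelta (x j) (y j))%:P * 'X^#|A|.
  rewrite /P prod_add1; apply: eq_bigr => A _.
  by rewrite big_split /= rmorph_prod prodr_const.
have card_agree : #|[pred j | x j == y j]| = (l - hamming x y)%N.
  suff : (#|[pred j | x j == y j]| + hamming x y)%N = l by lia.
  rewrite -[RHS]card_ord -(cardC [pred j | x j == y j]); congr addn.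
  by apply: eq_card => j; rewrite !inE.
have P_factors : P = ((-1)%:P * 'X + 1) ^+ hamming x y *
                     ((s - 1)%:P * 'X + 1) ^+ (l - hamming x y).
  rewrite /P (bigID (fun j => x j == y j)) /=.
  rewrite (eq_bigr (fun=> (s - 1)%:P * 'X + 1)); last first.
    by move=> j /eqP->; rewrite /cdelta eqxx mulr1.
  rewrite [X in _ * X](eq_bigr (fun=> (-1)%:P * 'X + 1)); last first.
    by move=> j /negbTE xy; rewrite /cdelta xy mulr0 sub0r.
  rewrite !prodr_const card_agree mulrC; congr (_ ^+ _ * _).
  by apply: eq_card => j; rewrite !inE.
have := congr1 (fun p : {poly rat} => p`_k) P_subsets.
rewrite {1}P_factors coefM coef_sum => coef_k.
transitivity (\sum_(A : {set 'I_l}) ((\prod_(j in A) cdelta (x j) (y j))%:P * 'X^#|A|)`_k).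
  rewrite big_mkcond; apply: eq_bigr => A _.
  by rewrite coefCM coefXn eq_sym; case: eqP; rewrite ?mulr1 ?mulr0.
rewrite -coef_k /krawtchouk.
apply: eq_bigr => j _; rewrite !coef_exp_CX1.
by rewrite -(mulr_natr ((-1) ^+ j)) -(mulr_natr ((s - 1) ^+ (k - j))) mulrACA !mulrA.
Qed.

Lemma distBE (C : {set word S l}) k :
  \sum_(p | (p.1 \in C) && (p.2 \in C)) krawtchouk S l k (hamming p.1 p.2) =
  #|C|%:R ^+ 2 * distB C k.
Proof.
have [/cards0_eq C0 | nzC] := eqVneq #|C| 0%N.
  rewrite C0 cards0 expr0n mul0r big_pred0 // => p.
  by rewrite in_set0.
have hamming_le (p : word S l * word S l) : (hamming p.1 p.2 < l.+1)%N.
  by rewrite ltnS /hamming -[X in (_ <= X)%N]card_ord max_card.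
rewrite /distB /distA mulrA expr2 mulfK ?pnatr_eq0 //.
rewrite (eq_bigr (fun p => \sum_(i < l.+1) (hamming p.1 p.2 == i)%:R *
    krawtchouk S l k i)); last first.
  move=> p _; rewrite (bigD1 (Ordinal (hamming_le p))) //= eqxx mul1r.
  rewrite big1 ?addr0 // => i /negbTE ni.
  suff -> : (hamming p.1 p.2 == i) = false by rewrite mul0r.
  by apply: contraFF ni => /eqP hi; apply/eqP/val_inj.
rewrite exchange_big mulr_sumr; apply: eq_bigr => i _.
by rewrite -mulr_suml sumr_indicator mulrA [_ * (_ / _)]mulrC divfK ?pnatr_eq0.
Qed.

Definition cdelta_sum (C : {set word S l}) (J : {set 'I_l}) (w : word S l) : rat :=
  \sum_(c in C) \prod_(j in J) cdelta (c j) (w j).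

Lemma sum_cdelta_sum_sqr (C : {set word S l}) (J : {set 'I_l}) :
  s ^+ l * \sum_(p | (p.1 \in C) && (p.2 \in C)) \prod_(j in J) cdelta (p.1 j) (p.2 j) =
  \sum_(w : word S l) cdelta_sum C J w ^+ 2.
Proof.
rewrite mulr_sumr (eq_bigr _ (fun p _ => cdelta_gram J p.1 p.2)) exchange_big /=.
by apply: eq_bigr => w _; rewrite expr2 big_distrlr /= pair_big_dep.
Qed.

Lemma cdelta_sum_eq0 (C : {set word S l}) (J : {set 'I_l}) (w : word S l) :
  distB C #|J| = 0 -> cdelta_sum C J w = 0.
Proof.
move=> B0.
have sum_sqr0 :
    \sum_(A : {set 'I_l} | #|A| == #|J|) \sum_(v : word S l) cdelta_sum C A v ^+ 2 = 0.
  rewrite -(eq_bigr _ (fun A _ => sum_cdelta_sum_sqr C A)) -mulr_sumr exchange_big /=.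
  under eq_bigr do rewrite sum_prod_cdelta_krawtchouk.
  by rewrite distBE B0 !mulr0.
have := psumr_eq0P (fun A _ => sumr_ge0 _ (fun v _ => sqr_ge0 (cdelta_sum C A v))) sum_sqr0.
move=> /(_ J (eqxx _)) /(psumr_eq0P (fun v _ => sqr_ge0 _)) /(_ w isT) /eqP.
by rewrite sqrf_eq0 => /eqP.
Qed.

Definition matching (C : {set word S l}) (J : {set 'I_l}) (w : word S l) : {set word S l} :=
  [set c in C | [forall j in J, c j == w j]].

Lemma card_matching (C : {set word S l}) (m : nat) :
  (forall (J : {set 'I_l}) w, (0 < #|J| < m)%N -> cdelta_sum C J w = 0) ->
  forall (J : {set 'I_l}) w, (#|J| < m)%N -> (#|S| ^ #|J| * #|matching C J w|)%N = #|C|.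
Proof.
move=> vanish J w ltJm; apply/eqP; rewrite -(eqr_nat rat) natrM natrX; apply/eqP.
have prod_match (c : word S l) : \prod_(j in J) (cdelta (c j) (w j) + 1) =
    s ^+ #|J| * [forall j in J, c j == w j]%:R.
  by rewrite -prodr_indicator -prodr_const -big_split; apply: eq_bigr => j _; rewrite subrK.
have sum_prod : \sum_(c in C) \prod_(j in J) (cdelta (c j) (w j) + 1) = #|C|%:R.
  under eq_bigr do rewrite prod_add1_in.
  rewrite exchange_big /= (bigD1 set0) ?sub0set //= [X in _ + X]big1; last first.
    move=> A /andP [sAJ nA0]; apply: vanish; rewrite card_gt0 nA0.
    exact: leq_ltn_trans (subset_leq_card sAJ) ltJm.
  by rewrite addr0 (eq_bigr (fun=> 1)) => [|c _]; rewrite ?big_set0 // sumr_const.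
rewrite -sum_prod (eq_bigr _ (fun c _ => prod_match c)) -mulr_sumr sumr_indicator.
by congr (_ * _%:R); apply: eq_card => c; rewrite !inE.
Qed.

Lemma dual_distance_card_neq0 (C : {set word S l}) d : dual_distance_is C d -> #|C| != 0%N.
Proof.
case=> _ [+ _]; apply: contraNneq => C0.
by rewrite /distB C0 invr0 mul0r.
Qed.

Lemma dual_distance_card_matching (C : {set word S l}) d (J : {set 'I_l}) w :
  dual_distance_is C d -> (#|J| < d)%N -> (#|S| ^ #|J| * #|matching C J w|)%N = #|C|.
Proof.
case=> _ [_ Bk0]; apply: card_matching => {}J {}w /andP [J_gt0 ltJd].
exact/cdelta_sum_eq0/Bk0.
Qed.

End Delsarte.

Section Queries.
Variables (S : finType) (l : nat).
Implicit Types (C : {set word S l}) (c : word S l) (i : point S l).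

Lemma mem_block c j : (c j, j) \in block c.
Proof. exact: imset_f. Qed.

Lemma block_inj : injective (@block S l).
Proof.
move=> c c' cc'; apply/ffunP => j.
by have := mem_block c j; rewrite cc' => /imsetP [j' _ [-> ->]].
Qed.

Definition outcome_of (p : word S l * S) : {set point S l} * S := (block p.1, p.2).

Lemma outcomesE C i :
  outcomes C i = outcome_of @: setX [set c in C | c i.2 == i.1] [set: S].
Proof.
case: i => a js; apply/setP => -[B x]; rewrite !inE /=.
apply/andP/imsetP => [[/imsetP [c cC ->] /imsetP [j _ [-> ->]]] | [[c x'] cx [-> _]]].
  by exists (c, x); rewrite // !inE cC eqxx.
move: cx; rewrite !inE /= andbT => /andP [cC /eqP <-].
by rewrite imset_f ?mem_block.
Qed.

Lemma query_blockE i c x j :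
  query i (block c, x) j = if j == i.2 then (x, i.2) else (c j, j).
Proof.
rewrite /query; case: eqP => // _.
case: pickP => [y /setIP [/imsetP [j' _ ->]] | /(_ (c j, j))].
  by rewrite inE => /eqP /= ->.
by rewrite !inE mem_block eqxx.
Qed.

Lemma query_snd C i o j : o \in outcomes C i -> (query i o j).2 = j.
Proof.
by rewrite outcomesE => /imsetP [[c x] _ ->]; rewrite query_blockE; case: eqP.
Qed.

Lemma IC_recovery (F : fieldType) C (u : point S l -> F) : IC C u ->
  forall i o, o \in outcomes C i -> u i = - \sum_(j < l | j != i.2) u (query i o j).
Proof.
move=> uC [a js] o; rewrite outcomesE => /imsetP [[c x]].
rewrite !inE /= andbT => /andP [cC /eqP ca] ->.
have := uC c cC; rewrite /block big_imset /=; last by move=> j1 j2 _ _ [].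
rewrite (bigD1 js) //= ca => /eqP; rewrite addr_eq0 => /eqP ->.
by congr (- _); apply: eq_bigr => j nj; rewrite query_blockE (negbTE nj).
Qed.

Definition pattern_word i (y : 'I_l -> point S l) : word S l :=
  [ffun j => if j == i.2 then i.1 else (y j).1].

Lemma query_pattern i c x (T : {set 'I_l}) (y : 'I_l -> point S l) :
  c i.2 = i.1 -> (forall j, j \in T -> (y j).2 = j) ->
  [forall j in T, query i (block c, x) j == y j] =
  [forall j in i.2 |: T, c j == pattern_word i y j] && ((i.2 \in T) ==> (x == (y i.2).1)).
Proof.
move=> ci yT; apply/forall_inP/andP => [Q | [/forall_inP cT /implyP xT] j jT].
  split.
    apply/forall_inP => j; rewrite in_setU1 ffunE => /predU1P [-> | jT].
      by rewrite eqxx ci.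
    have [-> | nj] := eqVneq j i.2; first by rewrite ci.
    by have /eqP := Q j jT; rewrite query_blockE (negbTE nj) => <-.
  by apply/implyP => iT; have := Q _ iT; rewrite query_blockE eqxx => /eqP <-.
rewrite query_blockE [y j]surjective_pairing yT //.
have [ji | nj] := eqVneq j i.2.
  by rewrite ji in jT *; rewrite xpair_eqE eqxx andbT xT.
by rewrite xpair_eqE eqxx andbT; have := cT j (setU1r _ jT); rewrite ffunE (negbTE nj).
Qed.

Lemma query_pattern_outcomes C i (T : {set 'I_l}) (y : 'I_l -> point S l) :
  (forall j, j \in T -> (y j).2 = j) ->
  [set o in outcomes C i | [forall j in T, query i o j == y j]] =
  outcome_of @: setX (matching C (i.2 |: T) (pattern_word i y))
                     [set x | (i.2 \in T) ==> (x == (y i.2).1)].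
Proof.
move=> yT; rewrite outcomesE; apply/setP => o; rewrite inE.
apply/andP/imsetP => [[/imsetP [[c x] cx ->]] | [[c x] cx ->]].
  move: cx; rewrite !inE /= andbT => /andP [cC /eqP ci].
  rewrite query_pattern // => /andP [cT xT].
  by exists (c, x); rewrite // !inE cC cT.
move: cx; rewrite !inE /= => /andP [/andP [cC cT] xT].
have ci : c i.2 = i.1.
  by have /eqP := forall_inP cT i.2 (setU11 _ _); rewrite ffunE eqxx.
by rewrite imset_f ?query_pattern ?cT ?xT // !inE cC ci eqxx.
Qed.

Lemma card_query_pattern C d i (T : {set 'I_l}) (y : 'I_l -> point S l) :
  dual_distance_is C d -> (#|T|.+1 < d)%N -> (forall j, j \in T -> (y j).2 = j) ->
  (#|[set o in outcomes C i | [forall j in T, query i o j == y j]]| * #|S| ^ #|T|)%N = #|C|.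
Proof.
move=> dC ltTd yT.
rewrite query_pattern_outcomes // card_imset; last first.
  by move=> [c x] [c' x'] [/block_inj -> ->].
rewrite cardsX -mulnA.
rewrite -(dual_distance_card_matching (J := i.2 |: T) (pattern_word i y) dC); last first.
  by apply: leq_ltn_trans ltTd; rewrite cardsU1; case: (_ \notin _).
rewrite mulnC; congr (_ * _)%N; rewrite cardsU1.
case: (i.2 \in T).
  suff -> : [set x | true ==> (x == (y i.2).1)] = [set (y i.2).1] by rewrite cards1 mul1n.
  by apply/setP => x; rewrite !inE.
suff -> : [set x | false ==> (x == (y i.2).1)] = [set: S] by rewrite cardsT -expnS.
by apply/setP => x; rewrite !inE.
Qed.

Lemma query_prob_pattern C d i (T : {set 'I_l}) (y : 'I_l -> point S l) :
  dual_distance_is C d -> (#|T|.+1 < d)%N ->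
  query_prob C i (fun Q => [forall j in T, Q j == y j]) =
  if [forall j in T, (y j).2 == j] then (#|S| ^ #|T|)%:R^-1 else 0.
Proof.
move=> dC ltTd.
have card_outcomes : #|outcomes C i| = #|C|.
  rewrite -(card_query_pattern i (T := set0) (y := y) dC) ?cards0 ?muln1 //.
  - apply: eq_card => o; rewrite [RHS]inE andb_idr // => _.
    by apply/forall_inP => j; rewrite in_set0.
  - exact: leq_ltn_trans ltTd.
  - by move=> j; rewrite in_set0.
rewrite /query_prob card_outcomes.
case: ifP => [/forall_inP yT | /negbT /forall_inPn [j jT yj]]; last first.
  suff -> : [set o in outcomes C i | [forall j in T, query i o j == y j]] = set0.
    by rewrite cards0 mul0r.
  apply/setP => o; rewrite in_set0 [LHS]inE; apply/andP => -[oC /forall_inP Q].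
  by move: yj; rewrite -(eqP (Q j jT)) (query_snd _ oC) eqxx.
have := card_query_pattern i (y := y) dC ltTd (fun j jT => eqP (yT j jT)).
set e := #|_| => eC.
have e_neq0 : e%:R != 0 :> rat.
  by rewrite pnatr_eq0; apply: contraNneq (dual_distance_card_neq0 dC) => e0; rewrite -eC e0.
by rewrite -eC natrM invfM mulrA divff ?mul1r.
Qed.

End Queries.

Theorem mainTheorem18 (S : finType) (l t : nat) (C : {set word S l})
  (F : finFieldType) :
  (1 <= t)%N ->
  dual_distance_is C t.+2 ->
  (t.+2 <= l)%N ->
  (forall T : {set 'I_l}, (#|T| <= t)%N ->
     forall (i i' : point S l) (y : 'I_l -> point S l),
       query_prob C i (fun Q => [forall j in T, Q j == y j]) =
       query_prob C i' (fun Q => [forall j in T, Q j == y j]))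
  /\
  (forall (u : point S l -> F), IC C u ->
     forall (i : point S l) o, o \in outcomes C i ->
       u i = - \sum_(j < l | j != i.2) u (query i o j))%R.
Proof.
move=> _ dC _; split => [T leTt i i' y | u uC]; last exact: IC_recovery.
have ltTt : (#|T|.+1 < t.+2)%N by rewrite !ltnS.
by rewrite (query_prob_pattern i y dC ltTt) (query_prob_pattern i' y dC ltTt).
Qed.
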